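(* Let $(A,\wedge,\vee,0,1)$ be a bounded distributive lattice and $\to$ a binary operation on $A$. Then $(A,\wedge,\vee,\to,0,1)$ is a weak Heyting algebra if and only if $(A,\wedge,\vee,\wedge,\to,1)$ (with the meet also used as the monoidal operation) is a $\mathsf{DLCMI}$. Consequently the variety of weak Heyting algebras can be identified with the subvariety of $\mathsf{DLCMI}$ defined by the equation $x\wedge y\approx x\cdot y$.
   Context: A weak Heyting algebra is an algebra $(A,\wedge,\vee,\to,0,1)$ such that $(A,\wedge,\vee,0,1)$ is a bounded distributive lattice and for all $a,b,c$: $(a\to b)\wedge(a\to c)=a\to(b\wedge c)$; $(a\to c)\wedge(b\to c)=(a\vee b)\to c$; $(a\to b)\wedge(b\to c)\le a\to c$; $a\to a=1$. An algebra $(A,\wedge,\vee,\cdot,\to,1)$ of type $(2,2,2,2,0)$ is a $\mathsf{DLCMI}$ if for all $a,b,c\in A$: (1) $(A,\wedge,\vee)$ is a distributive lattice; (2) $1$ is its largest element; (3) $(A,\cdot,1)$ is a commutative monoid; (4) $(a\to b)\wedge(a\to c)=a\to(b\wedge c)$; (5) $(a\to c)\wedge(b\to c)=(a\vee b)\to c$; (6) $a\to a=1$; (7) $(a\vee b)\cdot c=(a\cdot c)\vee(b\cdot c)$; (8) $(a\to b)\cdot(b\to c)\le a\to c$; (9) $a\to b\le (a\cdot c)\to(b\cdot c)$. *)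

From mathcomp Require Import all_boot all_order.
Set Implicit Arguments. Unset Strict Implicit. Unset Printing Implicit Defensive.
Import Order.TTheory.
Local Open Scope order_scope.

Definition weak_heyting_axioms {d} (A : tbDistrLatticeType d) (imp : A -> A -> A) : Prop :=
  [/\ (forall a b c : A, imp a b `&` imp a c = imp a (b `&` c)),
      (forall a b c : A, imp a c `&` imp b c = imp (a `|` b) c),
      (forall a b c : A, imp a b `&` imp b c <= imp a c)
    & (forall a : A, imp a a = \top)].

Definition DLCMI (A : Type) (meet join mul imp : A -> A -> A) (one : A) : Prop :=
  let le x y := meet x y = x in
  (* (1) (A, meet, join) is a distributive lattice *)
      ((forall x y z, meet x (meet y z) = meet (meet x y) z) /\
          (forall x y z, join x (join y z) = join (join x y) z) /\
          (forall x y, meet x y = meet y x) /\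
          (forall x y, join x y = join y x) /\
          (forall x y, meet x (join x y) = x) /\
          (forall x y, join x (meet x y) = x)
        /\ (forall x y z, meet x (join y z) = join (meet x y) (meet x z))) /\
      (* (2) one is the largest element *)
      (forall x, le x one) /\
      (* (3) (A, mul, one) is a commutative monoid *)
      ((forall x y z, mul x (mul y z) = mul (mul x y) z) /\
          (forall x y, mul x y = mul y x)
        /\ (forall x, mul one x = x)) /\
      (* (4) *) (forall a b c, meet (imp a b) (imp a c) = imp a (meet b c)) /\
      (* (5) *) (forall a b c, meet (imp a c) (imp b c) = imp (join a b) c) /\
      (* (6) *) (forall a, imp a a = one) /\
      (* (7) *) (forall a b c, mul (join a b) c = join (mul a c) (mul b c)) /\
      (* (8) *) (forall a b c, le (mul (imp a b) (imp b c)) (imp a c))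
    /\ (* (9) *) (forall a b c, le (imp a b) (imp (mul a c) (mul b c))).

From mathcomp Require Import all_boot all_order.
Import Order.TTheory.
Local Open Scope order_scope.

(* With the meet as monoid operation, axioms (1)-(3) and (7) of a DLCMI hold in
   any bounded distributive lattice, and (4)-(6), (8) are the weak Heyting
   axioms; so everything rests on (9), [a -> b <= (a /\ c) -> (b /\ c)].  By (4)
   the right-hand side is [((a /\ c) -> b) /\ ((a /\ c) -> c)]; the second
   factor is [1] and the first dominates [a -> b], since (5) makes [->]
   antitone in its first argument. *)

Section WeakHeyting.
Variables (d : Order.disp_t) (A : tbDistrLatticeType d) (imp : A -> A -> A).

Lemma DLCMI_meetE :
  DLCMI (@Order.meet d A) (@Order.join d A) (@Order.meet d A) imp \top <->
  weak_heyting_axioms imp /\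
  (forall a b c : A, imp a b <= imp (a `&` c) (b `&` c)).
Proof.
split.
- case=> _ [_ [_ [imp_meet [imp_join [imp_refl [_ [imp_trans imp_mul]]]]]]].
  split=> [|a b c]; last exact/meet_idPl.
  by split=> // a b c; apply/meet_idPl.
- case=> [[imp_meet imp_join imp_trans imp_refl] imp_mul].
  split; first by do 6?split; [exact: meetA | exact: joinA | exact: meetC
    | exact: joinC | move=> x y; exact: joinKI
    | move=> x y; exact: meetKU | exact: meetUr].
  split; first by move=> x; apply/meet_idPl; exact: lex1.
  split; first by do 2?split; [exact: meetA | exact: meetC | exact: meet1x].
  do 3 (split=> //); split; first exact: meetUl.
  by split=> a b c; apply/meet_idPl.
Qed.

Hypothesis weak_heyting : weak_heyting_axioms imp.

Lemma imp_antitone (x y c : A) : x <= y -> imp y c <= imp x c.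
Proof.
have [_ imp_join _ _] := weak_heyting.
by move=> /join_idPr xy; apply/meet_idPl; rewrite meetC imp_join xy.
Qed.

Lemma imp_top_of_le (a b : A) : a <= b -> imp a b = \top.
Proof.
have [_ _ _ imp_refl] := weak_heyting.
by move=> ab; apply/eqP; rewrite eq_le lex1 -(imp_refl b) imp_antitone.
Qed.

Lemma imp_meetr_compat (a b c : A) : imp a b <= imp (a `&` c) (b `&` c).
Proof.
have [imp_meet _ _ _] := weak_heyting.
by rewrite -imp_meet [imp _ c]imp_top_of_le ?leIr // meetx1 imp_antitone ?leIl.
Qed.

End WeakHeyting.

Theorem lemma2p5 {d : Order.disp_t} (A : tbDistrLatticeType d) (imp : A -> A -> A) :
  weak_heyting_axioms imp <->
  DLCMI (@Order.meet d A) (@Order.join d A) (@Order.meet d A) imp (\top : A).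
Proof.
split=> [wh | /DLCMI_meetE [] //].
by apply/DLCMI_meetE; split=> //; exact: imp_meetr_compat.
Qed.
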